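(* Let $P\in\mathbb{C}[y]$ with $\deg P\geq 2$, $\delta\in\mathbb{C}\setminus\{0\}$, $h_1(x,y)=(y,P(y)-\delta x)$, $\theta\in(0,2\pi)\setminus\{\frac{\pi}{2},\pi,\frac{3\pi}{2}\}$, $R_\theta$ the linear map of $\mathbb{C}^2$ with matrix $\begin{pmatrix}\cos\theta&-\sin\theta\\ \sin\theta&\cos\theta\end{pmatrix}$, and $h_2=R_\theta^{-1}\circ h_1\circ R_\theta$. Then the group $G=\langle h_1,h_2\rangle$ of automorphisms of $\mathbb{C}^2$ is isomorphic to the free group on two generators (freely generated by $h_1,h_2$). *)

From mathcomp Require Import all_boot all_algebra.
From mathcomp Require Import all_classical all_reals all_analysis.
From mathcomp.real_closed Require Import complex.
Set Implicit Arguments. Unset Strict Implicit. Unset Printing Implicit Defensive.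
Import GRing.Theory Num.Theory.
Local Open Scope ring_scope.
Local Open Scope complex_scope.

Section Henon.
Variables (R : realType).
Local Notation C := R[i].

Definition henon (P : {poly C}) (delta : C) (z : C * C) : C * C :=
  (z.2, P.[z.2] - delta * z.1).

Definition henon_inv (P : {poly C}) (delta : C) (z : C * C) : C * C :=
  ((P.[z.1] - z.2) / delta, z.1).

Definition rot (theta : R) (z : C * C) : C * C :=
  ((cos theta)%:C * z.1 - (sin theta)%:C * z.2,
   (sin theta)%:C * z.1 + (cos theta)%:C * z.2).

Definition rot_inv (theta : R) (z : C * C) : C * C := rot (- theta) z.

Definition h2 (P : {poly C}) (delta : C) (theta : R) : C * C -> C * C :=
  rot_inv theta \o henon P delta \o rot theta.
Definition h2_inv (P : {poly C}) (delta : C) (theta : R) : C * C -> C * C :=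
  rot_inv theta \o henon_inv P delta \o rot theta.

End Henon.

(* A letter is (generator index, inverted?) : false = f1, true = f2. *)
Definition letter := (bool * bool)%type.

(* A word is reduced if no letter is immediately followed by its inverse. *)
Definition reduced_word (w : seq letter) : bool :=
  sorted (fun a b : letter => ~~ ((a.1 == b.1) && (a.2 != b.2))) w.

Definition freely_generate (T : Type) (f1 f1i f2 f2i : T -> T) : Prop :=
  [/\ cancel f1 f1i, cancel f1i f1, cancel f2 f2i, cancel f2i f2 &
      forall w : seq letter, w != [::] -> reduced_word w ->
        foldr (fun l g => (match l with
                           | (false, false) => f1 | (false, true) => f1i
                           | (true, false) => f2 | (true, true) => f2i end) \o g)
              id w <> id].

From Pilot Require Import Defs.
From mathcomp Require Import all_boot all_algebra.
From mathcomp Require Import all_classical all_reals all_analysis.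
From mathcomp.real_closed Require Import complex.
From mathcomp Require Import order ring lra.
Set Implicit Arguments. Unset Strict Implicit. Unset Printing Implicit Defensive.
Import Order.TTheory GRing.Theory Num.Theory.
Local Open Scope ring_scope.
Local Open Scope complex_scope.

(* Ping-pong.  Since deg P >= 2, |P(y)| eventually dominates every multiple
   of |y|; hence h1 sends the region where |y| is large and |x| is at most a
   multiple of |y| into a thin cone around the y-axis, and h1^-1 sends the
   symmetric region into a thin cone around the x-axis.  As cos theta and
   sin theta are both nonzero, R_theta and R_theta^-1 send either cone to
   points whose two coordinates are comparable and large, so into both
   regions.  The two cones and their preimages under R_theta are then four
   disjoint nonempty sets, each generator mapping all of them except the set
   of its inverse into its own set; no nonempty reduced word can then act as
   the identity. *)

Section PingPong.
Variables (T : Type) (f1 f1i f2 f2i : T -> T).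

Definition letter_act (l : letter) : T -> T :=
  match l with
  | (false, false) => f1 | (false, true) => f1i
  | (true, false) => f2 | (true, true) => f2i
  end.

Definition word_act (w : seq letter) : T -> T :=
  foldr (fun l g => letter_act l \o g) id w.

Definition can_follow (a b : letter) : bool := ~~ ((a.1 == b.1) && (a.2 != b.2)).

Lemma exists_can_follow_neq (a b : letter) : exists c, can_follow a c /\ c != b.
Proof.
by case: a b => [[] []] [[] []];
  first [by exists (false, false) | by exists (false, true) | by exists (true, false)].
Qed.

Variable S : letter -> T -> Prop.
Hypothesis S_maps : forall l l' z, can_follow l l' -> S l' z -> S l (letter_act l z).
Hypothesis S_disjoint : forall l l' z, S l z -> S l' z -> l = l'.
Hypothesis S_nonempty : forall l, exists z, S l z.

Lemma word_act_in l w l' z : path can_follow l w -> can_follow (last l w) l' ->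
  S l' z -> S l (word_act (l :: w) z).
Proof.
elim: w l => [|l1 w IHw] l /=; first by move=> _; exact: S_maps.
by move=> /andP[l_l1 w_path] w_l' Sz; apply: S_maps l_l1 (IHw _ w_path w_l' Sz).
Qed.

Lemma pingpong_freely_generate :
  cancel f1 f1i -> cancel f1i f1 -> cancel f2 f2i -> cancel f2i f2 ->
  freely_generate f1 f1i f2 f2i.
Proof.
move=> f1K f1iK f2K f2iK; split=> // -[//|l w] _ w_reduced w_id.
have [l' [w_l' l'_neq]] := exists_can_follow_neq (last l w) l.
have [z Sz] := S_nonempty l'.
have := word_act_in w_reduced w_l' Sz.
change (word_act (l :: w) = id) in w_id; rewrite w_id => Slz.
by move/eqP: l'_neq; apply; exact: S_disjoint Sz Slz.
Qed.

End PingPong.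

Section ComplexNorm.
Variable R : rcfType.
Local Notation C := R[i].
Local Notation normc := (@Normc.normc R).

Lemma normc_ge0 (z : C) : 0 <= normc z.
Proof. exact: normr_ge0 (z : Rcomplex R). Qed.

Lemma normc_gt0 (z : C) : (0 < normc z) = (z != 0).
Proof. exact: normr_gt0 (z : Rcomplex R). Qed.

Lemma lerB_normcD (z w : C) : normc z - normc w <= normc (z + w).
Proof. exact: lerB_normD (z : Rcomplex R) w. Qed.

Lemma normc_real (r : R) : normc r%:C = `|r|.
Proof. by rewrite /Normc.normc /= expr0n /= addr0 sqrtr_sqr. Qed.

Lemma normc_lin_bounds (a b m : R) (w z : C) :
  `|a| <= 1 -> m <= `|b| <= 1 -> 8 * normc w <= m * normc z ->
  m * normc z <= 2 * normc (a%:C * w + b%:C * z) /\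
  normc (a%:C * w + b%:C * z) <= 2 * normc z.
Proof.
move=> a_le1 /andP[m_b b_le1] w_small.
have := Normc.normcM a%:C w; have := Normc.normcM b%:C z; rewrite !normc_real.
have := normc_ge0 w; have := normc_ge0 z.
have := lerB_normcD (b%:C * z) (a%:C * w).
have := le_normcD (a%:C * w) (b%:C * z).
rewrite [b%:C * z + _]addrC; nra.
Qed.

(* Write p = q 'X + a: then |p(z)| >= |q(z)| |z| - |a|, and the bound
   |q(z)| >= c |z|^(n-1) from the induction also covers n = 0. *)
Lemma poly_normc_growth (p : {poly C}) (n : nat) : (n < size p)%N ->
  exists c, 0 < c /\
    exists M, forall z, M <= normc z -> c * normc z ^+ n <= normc p.[z].
Proof.
elim/poly_ind: p n => [|q a IHq] n; first by rewrite size_poly0.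
have [->|q_neq0] := eqVneq q 0.
  rewrite mul0r add0r size_polyC; case: n => [|n]; last by case: (a != 0).
  rewrite lt0b => a_neq0.
  exists (normc a); split; first by rewrite normc_gt0.
  by exists 0 => z _; rewrite expr0 mulr1 hornerC.
rewrite size_MXaddC (negbTE q_neq0) ltnS => n_le.
have n_lt : (n.-1 < size q)%N by case: n n_le => [_|//]; rewrite size_poly_gt0.
have [c [c_gt0 [M qM]]] := IHq n.-1 n_lt.
exists (c / 2); split; first by rewrite divr_gt0.
exists (`|M| + 1 + 2 * normc a / c) => z z_large.
have a_c : 0 <= 2 * normc a / c.
  by rewrite divr_ge0 ?mulr_ge0 ?ler0n ?normc_ge0 ?ltW.
have z_ge1 : 1 <= normc z by have := normr_ge0 M; lra.
have q_large : c * normc z ^+ n.-1 <= normc q.[z].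
  by apply: qM; have := ler_norm M; lra.
have p_large : normc q.[z] * normc z - normc a <= normc (q * 'X + a%:P).[z].
  by rewrite hornerMXaddC -Normc.normcM; exact: lerB_normcD.
have z_n : normc z ^+ n <= normc z ^+ n.-1.+1.
  by apply: (ler_weXn2l z_ge1); exact: leqSpred.
have z_pow : normc z <= normc z ^+ n.-1.+1 by exact: ler_eXnr.
have a_small : 2 * normc a <= c * normc z.
  by rewrite [c * _]mulrC -ler_pdivrMr //; have := normr_ge0 M; lra.
have qz := ler_wpM2r (normc_ge0 z) q_large; rewrite /= -mulrA -exprSr in qz.
have := ler_wpM2l (ltW c_gt0) z_pow; have := ler_wpM2l (ltW c_gt0) z_n; lra.
Qed.

Lemma poly_normc_superlinear (p : {poly C}) : (2 < size p)%N ->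
  forall L, exists M, 0 < M /\ forall z, M <= normc z -> L * normc z <= normc p.[z].
Proof.
move=> /poly_normc_growth[c [c_gt0 [M0 pM0]]] L.
have L_c : 0 <= `|L| / c by rewrite divr_ge0 ?normr_ge0 ?ltW.
exists (`|M0| + 1 + `|L| / c); split; first by have := normr_ge0 M0; lra.
move=> z z_large.
have z_M0 : M0 <= normc z by have := ler_norm M0; lra.
have L_cz : `|L| <= c * normc z.
  by rewrite [c * _]mulrC -ler_pdivrMr //; have := normr_ge0 M0; lra.
have := pM0 z z_M0; have := ler_wpM2r (normc_ge0 z) L_cz.
have := ler_wpM2r (normc_ge0 z) (ler_norm L).
rewrite /= expr2 mulrA; lra.
Qed.

End ComplexNorm.

Section Rotation.
Variable R : realType.

Lemma rotation0 (z : R[i] * R[i]) : Defs.rot 0 z = z.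
Proof.
by case: z => x y; rewrite /Defs.rot /= cos0 sin0 rmorph0 rmorph1; congr pair; ring.
Qed.

Lemma rotationD (a b : R) (z : R[i] * R[i]) :
  Defs.rot a (Defs.rot b z) = Defs.rot (a + b) z.
Proof.
case: z => x y; rewrite /Defs.rot /= cosD sinD !rmorphB !rmorphD !rmorphM.
by congr pair; ring.
Qed.

Lemma rotationK (theta : R) : cancel (rot_inv theta) (Defs.rot theta).
Proof. by move=> z; rewrite /rot_inv rotationD subrr rotation0. Qed.

Lemma rotation_invK (theta : R) : cancel (Defs.rot theta) (rot_inv theta).
Proof. by move=> z; rewrite /rot_inv rotationD addNr rotation0. Qed.

Lemma cos_neq0 (theta : R) : 0 < theta < 2 * pi ->
  theta != pi / 2 -> theta != 3 * pi / 2 -> cos theta != 0.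
Proof.
move=> /andP[theta_gt0 theta_lt] neq_pihalf neq_3pihalf; have pi_pos := pi_gt0 R.
have [lt_pihalf|ge_pihalf] := ltP theta (pi / 2).
  by apply/lt0r_neq0/cos_gt0_pihalf; apply/andP; split; lra.
have gt_pihalf : pi / 2 < theta by rewrite lt_neqAle ge_pihalf eq_sym neq_pihalf.
have [lt_3pihalf|ge_3pihalf] := ltP theta (3 * pi / 2).
  rewrite -[theta](subrK pi) cosDpi oppr_eq0.
  by apply/lt0r_neq0/cos_gt0_pihalf; apply/andP; split; lra.
have gt_3pihalf : 3 * pi / 2 < theta.
  by rewrite lt_neqAle ge_3pihalf eq_sym neq_3pihalf.
have -> : theta = theta - 2 * pi + pi + pi by lra.
by rewrite !cosDpi opprK; apply/lt0r_neq0/cos_gt0_pihalf; apply/andP; split; lra.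
Qed.

Lemma sin_neq0 (theta : R) : 0 < theta < 2 * pi -> theta != pi -> sin theta != 0.
Proof.
move=> /andP[theta_gt0 theta_lt] neq_pi; have pi_pos := pi_gt0 R.
have [lt_pi|ge_pi] := ltP theta pi.
  by apply/lt0r_neq0/sin_gt0_pi; apply/andP; split; lra.
have gt_pi : pi < theta by rewrite lt_neqAle ge_pi eq_sym neq_pi.
rewrite -[theta](subrK pi) sinDpi oppr_eq0.
by apply/lt0r_neq0/sin_gt0_pi; apply/andP; split; lra.
Qed.

End Rotation.

Section HenonPingPong.
Variables (R : realType) (P : {poly R[i]}) (delta : R[i]) (theta m M : R).
Local Notation C := R[i].
Local Notation normc := (@Normc.normc R).

Hypothesis delta_neq0 : delta != 0.
Hypothesis m_gt0 : 0 < m.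
Hypothesis m_le_cos : m <= `|cos theta|.
Hypothesis m_le_sin : m <= `|sin theta|.
Hypothesis M_gt0 : 0 < M.
Hypothesis P_large :
  forall y, M <= normc y -> (9 + 9 * normc delta) * normc y <= m * normc P.[y].

(* [cone false] is a thin cone around the y-axis, away from the origin, and
   [dom false] a region that [h1] maps into it; [cone true] and [dom true] are
   their mirror images, for [h1^-1]. *)
Definition major (e : bool) (z : C * C) : C := if e then z.1 else z.2.
Definition minor (e : bool) (z : C * C) : C := if e then z.2 else z.1.

Definition cone (e : bool) (z : C * C) : Prop :=
  2 * M <= m * normc (major e z) /\ 8 * normc (minor e z) < m * normc (major e z).

Definition dom (e : bool) (z : C * C) : Prop :=
  M <= normc (major e z) /\ m * normc (minor e z) <= 4 * normc (major e z).

Lemma m_le1 : m <= 1.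
Proof. exact: le_trans m_le_cos (cos_max theta). Qed.

Lemma cone_sub_dom e z : cone e z -> dom e z.
Proof.
move=> [major_large minor_small]; have := m_le1.
have := normc_ge0 (major e z); have := normc_ge0 (minor e z); split; nra.
Qed.

Lemma cone_dom_disjoint e z : cone e z -> dom (~~ e) z -> False.
Proof.
have := normc_ge0 (minor e z); rewrite /cone /dom /major /minor.
by case: e => /= minor_ge0 [_ minor_small] [_ minor_large]; lra.
Qed.

Lemma cone_intro e z : M <= normc (minor e z) ->
  8 * normc (minor e z) < m * normc (major e z) -> cone e z.
Proof. by move=> minor_large minor_small; have := M_gt0; split; lra. Qed.

Definition henon_act (e : bool) : C * C -> C * C :=
  if e then henon_inv P delta else henon P delta.

Lemma henon_dom_cone z : dom false z -> cone false (henon P delta z).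
Proof.
case: z => x y [/= y_large x_small]; apply: cone_intro => //=.
have tri := lerB_normcD P.[y] (- (delta * x)); rewrite normcN Normc.normcM in tri.
have := ler_wpM2l (ltW m_gt0) tri; have := ler_wpM2l (normc_ge0 delta) x_small.
have := P_large y_large; have := mulr_ge0 (normc_ge0 delta) (normc_ge0 y).
have := M_gt0; rewrite mulrBr mulrCA; lra.
Qed.

Lemma henon_inv_dom_cone z : dom true z -> cone true (henon_inv P delta z).
Proof.
case: z => x y [/= x_large y_small]; apply: cone_intro => //=.
have delta_gt0 : 0 < normc delta by rewrite normc_gt0.
rewrite Normc.normcM Normc.normcV mulrA ltr_pdivlMr //.
have tri := lerB_normcD P.[x] (- y); rewrite normcN in tri.
have := ler_wpM2l (ltW m_gt0) tri; have := P_large x_large.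
have := mulr_ge0 (normc_ge0 delta) (normc_ge0 x).
have := M_gt0; rewrite mulrBr; lra.
Qed.

Lemma cone_lin_dom e e' z (a1 b1 a2 b2 : R) :
  `|a1| <= 1 -> m <= `|b1| <= 1 -> `|a2| <= 1 -> m <= `|b2| <= 1 -> cone e z ->
  dom e' (a1%:C * minor e z + b1%:C * major e z,
          a2%:C * minor e z + b2%:C * major e z).
Proof.
move=> a1_le1 b1_bounds a2_le1 b2_bounds [major_large minor_small].
have [low1 up1] := normc_lin_bounds a1_le1 b1_bounds (ltW minor_small).
have [low2 up2] := normc_lin_bounds a2_le1 b2_bounds (ltW minor_small).
have := ler_wpM2l (ltW m_gt0) up1; have := ler_wpM2l (ltW m_gt0) up2.
by rewrite /dom /major /minor; case: e' => /=; split; lra.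
Qed.

Lemma rot_cone_dom (phi : R) e e' z : m <= `|cos phi| -> m <= `|sin phi| ->
  cone e z -> dom e' (Defs.rot phi z).
Proof.
move=> m_cos m_sin.
have cos_b : m <= `|cos phi| <= 1 by rewrite m_cos cos_max.
have sin_b : m <= `|sin phi| <= 1 by rewrite m_sin sin_max.
have Nsin_b : m <= `|- sin phi| <= 1 by rewrite normrN.
case: z e => x y [] cone_z; rewrite /Defs.rot /=.
- have := cone_lin_dom e' (proj2 (andP Nsin_b)) cos_b (cos_max phi) sin_b cone_z.
  by rewrite /= rmorphN !mulNr addrC [_ * y + _]addrC.
- have := cone_lin_dom e' (cos_max phi) Nsin_b (sin_max phi) cos_b cone_z.
  by rewrite /= rmorphN !mulNr.
Qed.

Lemma henonK : cancel (henon P delta) (henon_inv P delta).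
Proof.
case=> x y; rewrite /henon /henon_inv /= opprB addrC subrK.
by rewrite mulrC mulKf.
Qed.

Lemma henon_invK : cancel (henon_inv P delta) (henon P delta).
Proof.
by case=> x y; rewrite /henon /henon_inv /= mulrC divfK // opprB addrC subrK.
Qed.

Lemma henon_act_dom_cone e z : dom e z -> cone e (henon_act e z).
Proof. by case: e; [exact: henon_inv_dom_cone | exact: henon_dom_cone]. Qed.

Definition chart (b : bool) : C * C -> C * C := if b then Defs.rot theta else id.
Definition chart_inv (b : bool) : C * C -> C * C := if b then rot_inv theta else id.

Lemma chartK b : cancel (chart_inv b) (chart b).
Proof. by case: b => //; exact: rotationK. Qed.

Local Notation act := (letter_act (henon P delta) (henon_inv P delta)
                                  (h2 P delta theta) (h2_inv P delta theta)).

Lemma letter_act_chart l z : act l z = chart_inv l.1 (henon_act l.2 (chart l.1 z)).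
Proof. by case: l => [[] []]. Qed.

(* The set of the letter (b, e) is [cone e], read in the coordinates in which
   the generator is a bare Hénon map (rotated by theta when b = true). *)
Definition pp_set (l : letter) (z : C * C) : Prop := cone l.2 (chart l.1 z).

Lemma pp_set_dom_other e b b' e' z :
  b' != b -> pp_set (b', e') z -> dom e (chart b z).
Proof.
rewrite /pp_set; case: b b' => [] [] //= _ cone_z.
  exact: rot_cone_dom cone_z.
rewrite -[z](rotation_invK theta) /rot_inv.
by apply: rot_cone_dom cone_z; rewrite ?cosN ?sinN ?normrN.
Qed.

Lemma pp_set_maps l l' z : can_follow l l' -> pp_set l' z -> pp_set l (act l z).
Proof.
case: l l' => [b e] [b' e'] follow_l' pp_z.
rewrite /pp_set letter_act_chart /= chartK; apply: henon_act_dom_cone.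
have [eq_b|neq_b] := eqVneq b' b; last exact: pp_set_dom_other _ neq_b pp_z.
move: follow_l' pp_z; rewrite /can_follow /pp_set /= eq_b eqxx /= negbK => /eqP <-.
exact: cone_sub_dom.
Qed.

Lemma pp_set_disjoint l l' z : pp_set l z -> pp_set l' z -> l = l'.
Proof.
case: l l' => [b e] [b' e'] pp_z pp'_z.
have [eq_b|neq_b] := eqVneq b' b; last first.
  by case: (cone_dom_disjoint pp_z (pp_set_dom_other (~~ e) neq_b pp'_z)).
have [eq_e|neq_e] := eqVneq e' e; first by rewrite eq_b eq_e.
have eq_e' : e' = ~~ e by case: e e' neq_e {pp_z pp'_z} => [] [].
move: pp'_z; rewrite /pp_set /= eq_b eq_e' => /cone_sub_dom.
by case/(cone_dom_disjoint pp_z).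
Qed.

Lemma pp_set_nonempty l : exists z, pp_set l z.
Proof.
have v_major : m * `|2 * M / m| = 2 * M.
  rewrite ger0_norm; last by rewrite divr_ge0 ?ltW ?mulr_gt0.
  by rewrite mulrC divfK // gt_eqF.
case: l => b e; exists (chart_inv b
  (if e then ((2 * M / m)%:C, 0%:C) else (0%:C, (2 * M / m)%:C))).
rewrite /pp_set chartK; have := M_gt0.
by case: e; rewrite /cone !normc_real normr0 v_major; split; lra.
Qed.

Lemma henon_h2_freely_generate :
  freely_generate (henon P delta) (henon_inv P delta)
                  (h2 P delta theta) (h2_inv P delta theta).
Proof.
apply: (pingpong_freely_generate pp_set_maps pp_set_disjoint pp_set_nonempty).
- exact: henonK.
- exact: henon_invK.
- exact: (can_comp (can_comp (rotationK theta) henonK) (rotation_invK theta)).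
- exact: (can_comp (can_comp (rotationK theta) henon_invK) (rotation_invK theta)).
Qed.

End HenonPingPong.

Theorem mainTheorem2 (R : realType) (P : {poly R[i]}) (delta : R[i]) (theta : R) :
  (2 < size P)%N -> delta != 0 ->
  0 < theta < 2 * pi ->
  theta != pi / 2 -> theta != pi -> theta != 3 * pi / 2 ->
  freely_generate (henon P delta) (henon_inv P delta)
                  (h2 P delta theta) (h2_inv P delta theta).
Proof.
move=> size_P delta_neq0 theta_range neq_pihalf neq_pi neq_3pihalf.
pose m := Num.min `|cos theta| `|sin theta|.
have m_gt0 : 0 < m by rewrite lt_min !normr_gt0 cos_neq0 // sin_neq0.
have [M [M_gt0 P_large]] :=
  poly_normc_superlinear size_P ((9 + 9 * Normc.normc delta) / m).
apply: (@henon_h2_freely_generate R P delta theta m M) => //.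
- by rewrite ge_min lexx.
- by rewrite ge_min lexx orbT.
- by move=> y /P_large; rewrite -ler_pdivrMl // mulrA [m^-1 * _]mulrC.
Qed.
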